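(* Let $n\geq 3$ and let $u=u_1u_2\cdots u_N$ be a u-p-cycle or a u-p-word for $n$-permutations. If $u_k=\Diamond$, then $u_{k+n}=\Diamond$ and $u_{k-n}=\Diamond$, where in the case of a u-p-word this is asserted only for those of the indices $k+n$, $k-n$ that lie in $\{1,\ldots,N\}$, and in the case of a u-p-cycle the indices are taken modulo $N$.
   Context: An $n$-permutation is a permutation of $\{1,\ldots,n\}$. For a word $w$ of distinct numbers, $\mathrm{red}(w)$ is obtained by replacing the $i$-th smallest letter by $i$. Let $\Diamond$ be a symbol not among the integers. A word $f=f_1\cdots f_n$ over the positive integers together with $\Diamond$, whose integer letters are pairwise distinct, covers an $n$-permutation $\pi$ if one can substitute real numbers for the occurrences of $\Diamond$ (independently) so that the resulting word has $n$ pairwise distinct entries and reduces to $\pi$; equivalently, $f_i<f_j\iff\pi_i<\pi_j$ for all positions $i,j$ holding integers. A u-p-word (universal partial word) for $n$-permutations is a word $u_1\cdots u_N$, $N\geq n$, over this alphabet containing at least one $\Diamond$, such that every factor $u_i\cdots u_{i+n-1}$ ($1\leq i\leq N-n+1$) has pairwise distinct integer letters and every $n$-permutation is covered by exactly one of these factors. A u-p-cycle is a cyclic word $u_1\cdots u_N$, $N\geq n$, containing at least one $\Diamond$, with indices read modulo $N$, satisfying the same conditions for its $N$ cyclic factors $u_iu_{i+1}\cdots u_{i+n-1}$, $1\leq i\leq N$. *)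

From mathcomp Require Import all_boot all_order all_fingroup.
Set Implicit Arguments. Unset Strict Implicit. Unset Printing Implicit Defensive.

Definition letter := option nat.
Notation Diamond := (@None nat).

Definition ints (f : seq letter) : seq nat := pmap id f.

Definition covers (n : nat) (f : seq letter) (pi : 'S_n) : Prop :=
  size f = n /\
  forall (i j : 'I_n) (a b : nat),
    nth Diamond f i = Some a -> nth Diamond f j = Some b ->
    (a < b) = (pi i < pi j).

(* factor of length n starting at (0-based) position i of a word *)
Definition wfactor (n : nat) (u : seq letter) (i : nat) : seq letter :=
  take n (drop i u).

(* cyclic factor of length n starting at (0-based) position i *)
Definition cfactor (n : nat) (u : seq letter) (i : nat) : seq letter :=
  [seq nth Diamond u ((i + j) %% size u) | j <- iota 0 n].

Definition pos_letters (u : seq letter) : Prop :=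
  forall k, Some k \in u -> 0 < k.

Definition is_upword (n : nat) (u : seq letter) : Prop :=
  [/\ n <= size u, pos_letters u, Diamond \in u,
      forall i, i < size u - n + 1 -> uniq (ints (wfactor n u i)) &
      forall pi : 'S_n,
        exists! i, i < size u - n + 1 /\ covers (wfactor n u i) pi].

Definition is_upcycle (n : nat) (u : seq letter) : Prop :=
  [/\ n <= size u, pos_letters u, Diamond \in u,
      forall i, i < size u -> uniq (ints (cfactor n u i)) &
      forall pi : 'S_n,
        exists! i, i < size u /\ covers (cfactor n u i) pi].

From mathcomp Require Import all_boot all_order all_fingroup zify.
From Stdlib Require Import Classical.
Set Implicit Arguments. Unset Strict Implicit. Unset Printing Implicit Defensive.

(* Read a u-p-word or u-p-cycle as the family of its windows of length
   n = n'+1: every pattern is matched by exactly one window, and consecutive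
   windows overlap in n' letters.  Suppose window k starts with a hole while
   window k+1 ends with a letter a.  Window k+1 has a letter among its first n'
   positions (else window k would match all its patterns), so some pattern s
   agrees with window k+1 there but not at the last position.  If the window
   matching s had a predecessor p, prepending a suitable value to s would give
   a pattern matched by both p and k, so p = k: absurd.  In a cycle every
   window has a predecessor.  In a word s must be matched by the first window;
   moving the last value of s around shows that a is extremal in window k+1
   (maximal, after complementing all letters) and that the first window has
   exactly two letters, a descent onto its last position.  For n >= 3 the
   second window then contradicts exactness, or windows 0 and 1 form a second
   such hole/letter pair, on which the descent clashes with the maximality of
   the last letter.  Reversing positions gives the backward statements. *)

Definition injective_on n (s : nat -> nat) :=
  forall y z, y < n -> z < n -> s y = s z -> y = z.

Definition distinct_letters n (f : nat -> letter) :=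
  forall y z c, y < n -> z < n -> f y = Some c -> f z = Some c -> y = z.

(* An injective [s] stands for the permutation with the same relative order on
   [0, n); [matches n f s] is then the covering relation. *)
Definition matches n (f : nat -> letter) (s : nat -> nat) :=
  forall y z a b, y < n -> z < n -> f y = Some a -> f z = Some b ->
    (a < b) = (s y < s z).

Section Patterns.
Variable n : nat.
Implicit Types (f : nat -> letter) (s : nat -> nat).

Lemma matches_of_lt f s : distinct_letters n f -> injective_on n s ->
  (forall y z a b, y < z -> z < n -> f y = Some a -> f z = Some b ->
     (a < b) = (s y < s z)) ->
  matches n f s.
Proof.
move=> fD sI H y z a b hy hz fy fz.
case: (ltngtP y z) => [yz | zy | eyz]; first exact: H.
- have ab : a != b by apply/eqP=> eab; move: fz; rewrite -eab => /(fD _ _ _ hy hz fy); lia.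
  have syz : s y != s z by apply/eqP=> /(sI _ _ hy hz); lia.
  have := H z y b a zy hy fz fy; lia.
- by move: fz; rewrite -eyz fy => -[->]; rewrite !ltnn.
Qed.

Lemma matches_diamonds f s : (forall t, t < n -> f t = Diamond) -> matches n f s.
Proof. by move=> fD y z a b hy; rewrite fD. Qed.

Definition upper s := \max_(t < n) (s t).+1.

Lemma lt_upper s t : t < n -> s t < upper s.
Proof. by move=> ht; rewrite /upper (bigD1 (Ordinal ht)) //= leq_maxl. Qed.

(* [q] becomes the value [v] and every other position keeps its order:
   [place s q v t < place s q v q] exactly when [s t < v]. *)
Definition place s (q v t : nat) := if t == q then 2 * v else 2 * s t + 1.

Lemma place_at s q v : place s q v q = 2 * v.
Proof. by rewrite /place eqxx. Qed.

Lemma place_off s q v t : t != q -> place s q v t = 2 * s t + 1.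
Proof. by rewrite /place => /negbTE ->. Qed.

Lemma injective_on_place s q v : injective_on n s -> injective_on n (place s q v).
Proof.
move=> sI y z hy hz; rewrite /place.
case: eqVneq => [->|_]; case: eqVneq => [->|_] //; try lia.
by move=> e; apply: sI => //; lia.
Qed.

Lemma matches_place_diamond f s q v : f q = Diamond -> matches n f s ->
  matches n f (place s q v).
Proof.
move=> fq fs y z a b hy hz fy fz.
have yq : y != q by apply/eqP=> eyq; rewrite eyq fq in fy.
have zq : z != q by apply/eqP=> ezq; rewrite ezq fq in fz.
rewrite !place_off // (fs y z a b) //; lia.
Qed.

Lemma matches_place_prefix f s v : matches n.+1 f s -> matches n f (place s n v).
Proof.
move=> fs y z a b hy hz fy fz.
rewrite !place_off; try (apply/eqP; lia).
rewrite (fs y z a b) //; [lia | exact: ltnW hy | exact: ltnW hz].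
Qed.

Lemma matches_place_self f s q : injective_on n s -> q < n -> matches n f s ->
  matches n f (place s q (s q)).
Proof.
move=> sI hq fs y z a b hy hz fy fz; rewrite (fs y z a b) //.
case: (eqVneq y z) => [<- | yz]; first by rewrite !ltnn.
have syz : s y != s z by apply: contra_neq yz; apply: sI.
by move: syz yz; rewrite /place; case: ifP => /eqP yq; case: ifP => /eqP zq; subst; lia.
Qed.

Definition std f t := if f t is Some c then c + n else t.

Lemma injective_on_std f : distinct_letters n f -> injective_on n (std f).
Proof.
move=> fD y z hy hz; rewrite /std.
case fy: (f y) => [a|]; case fz: (f z) => [b|] //; try lia.
by move/addIn => eab; move: fy; rewrite eab => /(fD _ _ _ hy hz)/(_ fz).
Qed.

Lemma matches_std f : matches n f (std f).
Proof. by move=> y z a b _ _ fy fz; rewrite /std fy fz ltn_add2r. Qed.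

Lemma std_max f ts w t : distinct_letters n f -> ts < n -> t < n ->
  f ts = Some w -> (forall d, f t = Some d -> d <= w) ->
  std f ts <= std f t -> t = ts.
Proof.
move=> fD hts ht fts wmax; rewrite /std fts.
case ft: (f t) => [d|]; last lia.
move: (wmax d ft) => dw wd; have edw : d = w by lia.
by move: ft; rewrite edw => /(fD _ _ _ ht hts)/(_ fts).
Qed.

Lemma matches_place_move f s q v v' : matches n f (place s q v) ->
  ~ matches n f (place s q v') ->
  exists b t c, [/\ f q = Some b, t < n, t != q & f t = Some c].
Proof.
move=> fv nfv'; apply: NNPP => nopair; apply: nfv' => y z a b hy hz fy fz.
case: (eqVneq y q) => [eyq | yq]; case: (eqVneq z q) => [ezq | zq].
- by move: fz; rewrite ezq -eyq fy => -[->]; rewrite !ltnn.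
- by subst q; case: nopair; exists a, z, b; split.
- by subst q; case: nopair; exists b, y, a; split.
- by rewrite !place_off // -(place_off s v yq) -(place_off s v zq) (fv y z a b).
Qed.

Lemma prefix_argmax f m t0 c0 : t0 < m -> f t0 = Some c0 ->
  exists ts w, [/\ ts < m, f ts = Some w & forall t d, t < m -> f t = Some d -> d <= w].
Proof.
move=> ht0 ft0.
have P0 : f (Ordinal ht0) != Diamond by rewrite /= ft0.
case: (@arg_maxnP _ _ (fun t : 'I_m => f t != Diamond) (fun t => oapp id 0 (f t)) P0).
move=> ts /= fts tsmax.
case Lts: (f ts) fts => [w|] // _; exists ts, w; split=> // t d ht ft.
by have := tsmax (Ordinal ht); rewrite /= ft Lts; apply.
Qed.

End Patterns.

Lemma escaping_pattern n' f t0 c0 a : distinct_letters n'.+1 f ->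
  t0 < n' -> f t0 = Some c0 -> f n' = Some a ->
  exists2 s, injective_on n'.+1 s & matches n' f s /\ ~ matches n'.+1 f s.
Proof.
move=> fD ht0 ft0 fa.
exists (place (std n'.+1 f) n' (if c0 < a then 0 else upper n'.+1 (std n'.+1 f))).
  exact/injective_on_place/injective_on_std.
split; first exact/matches_place_prefix/matches_std.
move=> fs; have := fs t0 n' c0 a (leqW ht0) (ltnSn n') ft0 fa.
rewrite place_at place_off; last by apply/eqP; lia.
by have := lt_upper (std n'.+1 f) (leqW ht0); case: ifP; lia.
Qed.

(** * Exact covers by overlapping windows *)

Definition exact_cover n M (L : nat -> nat -> letter) :=
  [/\ forall i, i < M -> distinct_letters n (L i),
      forall s, injective_on n s -> exists2 j, j < M & matches n (L j) s &
      forall s i j, injective_on n s -> i < M -> j < M ->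
        matches n (L i) s -> matches n (L j) s -> i = j].

Definition overlapping n' M (L : nat -> nat -> letter) :=
  forall i t, i.+1 < M -> t < n' -> L i.+1 t = L i t.+1.

Definition cyc_overlapping n' M (L : nat -> nat -> letter) :=
  forall i t, i < M -> t < n' -> L (i.+1 %% M) t = L i t.+1.

Lemma succ_mod_pred M j : j < M -> ((j + M.-1) %% M).+1 %% M = j.
Proof.
move=> hj; rewrite -addn1 modnDml -addnA addn1 prednK; last lia.
by rewrite modnDr modn_small.
Qed.

Section ExactCover.
Variables (n' M : nat) (L : nat -> nat -> letter).
Local Notation n := n'.+1.
Hypothesis HL : exact_cover n M L.

Lemma window_distinct i : i < M -> distinct_letters n (L i).
Proof. by case: HL => + _ _; apply. Qed.

Lemma window_cover s : injective_on n s -> exists2 j, j < M & matches n (L j) s.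
Proof. by case: HL => _ + _; apply. Qed.

Lemma window_unique s i j : injective_on n s -> i < M -> j < M ->
  matches n (L i) s -> matches n (L j) s -> i = j.
Proof. by case: HL => _ _; apply. Qed.

Section Successor.
Variable nx : nat -> nat.
Hypothesis L_nx : forall i t, i < M -> nx i < M -> t < n' -> L (nx i) t = L i t.+1.

Lemma next_window_prefix_letter k : k < M -> nx k < M -> k != nx k ->
  L k 0 = Diamond -> exists t c, t < n' /\ L (nx k) t = Some c.
Proof.
move=> hk hk' kk Lk0; apply: NNPP => none.
have Lk t : t < n -> L k t = Diamond.
  case: t => [//|t] ht; rewrite -L_nx //; case e: (L (nx k) t) => [c|] //.
  by case: none; exists t, c.
have := window_unique (injective_on_std (window_distinct hk')) hk hk'
  (matches_diamonds _ Lk) (@matches_std _ _).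
by move/eqP: kk.
Qed.

Lemma no_predecessor k s j p : k < M -> nx k < M -> L k 0 = Diamond ->
  injective_on n s -> matches n' (L (nx k)) s -> ~ matches n (L (nx k)) s ->
  j < M -> matches n (L j) s -> p < M -> nx p = j -> False.
Proof.
move=> hk hk' Lk0 sI pre nm hj Lj hp epj; subst j.
(* Prepend to [s] a value [v] placed as the first letter [e] of [L p] demands:
   both [L p] and [L k] match the result, hence [p = k]. *)
pose e := if L p 0 is Some e then e else 0.
pose below t := if L (nx p) t is Some c then c < e else false.
pose v := \max_(t < n' | below t) (s t).+1.
pose s' t := if t is t'.+1 then 2 * s t' + 1 else 2 * v.
have s'I : injective_on n s'.
  case=> [|y] [|z] hy hz //=; try lia.
  by move=> e'; congr S; apply: sI; lia.
have Lks' : matches n (L k) s'.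
  case=> [|y] [|z] a b hy hz; rewrite ?Lk0 // -!L_nx //= => ky kz.
  by rewrite (pre y z a b) //; lia.
have Lps' : matches n (L p) s'.
  apply: matches_of_lt (window_distinct hp) s'I _ => -[|y] [|z] a b //= yz hz; last first.
    move=> Ly Lz; have hy : y < n' by lia.
    by rewrite -!L_nx // in Ly Lz; rewrite (Lj y z a b) //; lia.
  move=> Lp0 Lz; rewrite -L_nx // in Lz.
  have ea : e = a by rewrite /e Lp0.
  have ab : a != b.
    apply/eqP=> eab; move: Lz; rewrite -eab L_nx //.
    by move=> /(window_distinct hp (ltn0Sn n') hz Lp0).
  case: (ltngtP a b) => [ab'|ba|]; last by move/eqP: ab.
  - suff : v <= s z by lia.
    apply/bigmax_leqP=> t; rewrite /below; case Lt: (L (nx p) t) => [c|] // ce.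
    have ht : t < n := leqW (ltn_ord t).
    by rewrite -(Lj t z c b) //; lia.
  - suff : s z < v by lia.
    apply: (leq_bigmax_cond (F := fun t : 'I_n' => (s t).+1) (Ordinal (hz : z < n'))).
    by rewrite /below /= Lz ea.
have ekp := window_unique s'I hk hp Lks' Lps'; subst p.
exact: nm Lj.
Qed.

End Successor.

Section Cycle.
Hypothesis L_cycle : cyc_overlapping n' M L.
Hypothesis M_gt1 : 1 < M.

Lemma cycle_hole_forward k : k < M -> L k 0 = Diamond -> L (k.+1 %% M) n' = Diamond.
Proof.
move=> hk Lk0; case La: (L (k.+1 %% M) n') => [a|] //; exfalso.
have L_nx i t : i < M -> i.+1 %% M < M -> t < n' -> L (i.+1 %% M) t = L i t.+1.
  by move=> hi _; apply: L_cycle.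
have hk' : k.+1 %% M < M by rewrite ltn_mod; lia.
have kk : k != k.+1 %% M.
  case: (ltnP k.+1 M) => h; first by rewrite modn_small //; apply/eqP; lia.
  have -> : k.+1 = M by lia.
  by rewrite modnn; apply/eqP; lia.
have [t0 [c0 [ht0 Lt0]]] := next_window_prefix_letter L_nx hk hk' kk Lk0.
have [s sI [pre nm]] := escaping_pattern (window_distinct hk') ht0 Lt0 La.
have [j hj Lj] := window_cover sI.
have hp : (j + M.-1) %% M < M by rewrite ltn_mod; lia.
exact: (no_predecessor L_nx hk hk' Lk0 sI pre nm hj Lj hp (succ_mod_pred hj)).
Qed.

End Cycle.

Section Word.
Hypothesis L_succ : overlapping n' M L.

Lemma first_window_matches k s : k.+1 < M -> L k 0 = Diamond -> injective_on n s ->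
  matches n' (L k.+1) s -> ~ matches n (L k.+1) s -> matches n (L 0) s.
Proof.
move=> hk Lk0 sI pre nm; have [[|j] hj Lj] := window_cover sI => //.
by case: (no_predecessor (nx := succn) (fun i t _ => @L_succ i t) (ltnW hk) hk Lk0 sI
  pre nm hj Lj (ltnW hj) erefl).
Qed.

Local Notation moved k v := (place (std n (L k.+1)) n' v).

Lemma first_window_matches_moved k v : k.+1 < M -> L k 0 = Diamond ->
  ~ matches n (L k.+1) (moved k v) -> matches n (L 0) (moved k v).
Proof.
move=> hk Lk0; apply: first_window_matches => //.
  exact/injective_on_place/injective_on_std/window_distinct.
exact/matches_place_prefix/matches_std.
Qed.

Lemma first_window_matches_bottom k a t c : k.+1 < M -> L k 0 = Diamond ->
  L k.+1 n' = Some a -> t < n' -> L k.+1 t = Some c -> c < a ->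
  matches n (L 0) (moved k 0).
Proof.
move=> hk Lk0 La ht ft ca; apply: first_window_matches_moved => // fs.
have := fs t n' c a (leqW ht) (ltnSn n') ft La.
by rewrite place_at place_off; [lia | apply/eqP; lia].
Qed.

Lemma first_window_misses_next k : k.+1 < M ->
  ~ matches n (L 0) (moved k (std n (L k.+1) n')).
Proof.
move=> hk ga; have fD := window_distinct hk.
have fa := matches_place_self (injective_on_std fD) (ltnSn n') (@matches_std n (L k.+1)).
have sI := injective_on_place (q := n') (v := std n (L k.+1) n') (injective_on_std fD).
by have := window_unique sI (ltn_trans (ltn0Sn k) hk) hk ga fa.
Qed.

Lemma last_letter_extreme k a : k.+1 < M -> L k 0 = Diamond -> L k.+1 n' = Some a ->
  (forall t c, t < n' -> L k.+1 t = Some c -> c < a) \/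
  (forall t c, t < n' -> L k.+1 t = Some c -> a < c).
Proof.
move=> hk Lk0 La; have fD := window_distinct hk.
have neq_a t c : t < n' -> L k.+1 t = Some c -> c != a.
  move=> ht ft; apply/eqP=> eca; move: ft; rewrite eca.
  by move=> /(fD _ _ _ (leqW ht) (ltnSn n'))/(_ La); lia.
case: (classic (exists t c, [/\ t < n', L k.+1 t = Some c & a < c])) => [above | no_above];
  last first.
  left=> t c ht ft; case: (ltngtP c a) (neq_a t c ht ft) => // ac _.
  by case: no_above; exists t, c.
case: (classic (exists t c, [/\ t < n', L k.+1 t = Some c & c < a])) => [below | no_below];
  last first.
  right=> t c ht ft; case: (ltngtP a c) (neq_a t c ht ft) => // ca _.
  by case: no_below; exists t, c.
exfalso; have [t1 [c1 [ht1 ft1 ac1]]] := above; have [t2 [c2 [ht2 ft2 ca2]]] := below.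
have g0 := first_window_matches_bottom hk Lk0 La ht2 ft2 ca2.
have gT : matches n (L 0) (moved k (upper n (std n (L k.+1)))).
  apply: first_window_matches_moved => // fs.
  have := fs n' t1 a c1 (ltnSn n') (leqW ht1) La ft1.
  rewrite place_at place_off; last by apply/eqP; lia.
  by have := lt_upper (std n (L k.+1)) (leqW ht1); lia.
have [b [t [c [gb ht tn gt]]]] := matches_place_move g0 (first_window_misses_next hk).
have := g0 n' t b c (ltnSn n') ht gb gt; have := gT n' t b c (ltnSn n') ht gb gt.
rewrite !place_at !place_off //.
by have := lt_upper (std n (L k.+1)) ht; lia.
Qed.

Definition two_letter_descent (g : nat -> letter) ts b c :=
  [/\ g ts = Some c, g n' = Some b, b < c &
      forall t, t < n' -> t != ts -> g t = Diamond].

Lemma first_window_shape k a ts w : k.+1 < M -> L k 0 = Diamond -> L k.+1 n' = Some a ->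
  (forall t c, t < n' -> L k.+1 t = Some c -> c < a) ->
  ts < n' -> L k.+1 ts = Some w -> (forall t d, t < n' -> L k.+1 t = Some d -> d <= w) ->
  exists b c, two_letter_descent (L 0) ts b c.
Proof.
move=> hk Lk0 La amax hts fts wmax; have fD := window_distinct hk.
have tsn : ts != n' by apply/eqP; lia.
have g0 := first_window_matches_bottom hk Lk0 La hts fts (amax ts w hts fts).
have gts : matches n (L 0) (moved k (std n (L k.+1) ts)).
  apply: first_window_matches_moved => // fs.
  have := fs ts n' w a (leqW hts) (ltnSn n') fts La; rewrite place_at place_off //.
  by have := amax ts w hts fts; lia.
have [b [t [c [gb ht tn gt]]]] := matches_place_move g0 (first_window_misses_next hk).
have ht' : t < n' by move/eqP: tn; lia.
have only_ts u d : u < n' -> L 0 u = Some d -> b < d /\ u = ts.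
  move=> hu gu; have un : u != n' by apply/eqP; lia.
  have := g0 n' u b d (ltnSn n') (leqW hu) gb gu.
  have := gts n' u b d (ltnSn n') (leqW hu) gb gu.
  rewrite !place_at !place_off // => lt_ts lt_0; split; first lia.
  apply: (std_max fD (leqW hts) (leqW hu) fts) => [e fu|]; last lia.
  exact: wmax fu.
have [bc ets] := only_ts t c ht' gt; subst t.
exists b, c; split=> // u hu uts; case gu: (L 0 u) => [d|] //.
by have [_ eu] := only_ts u d hu gu; move/eqP: uts.
Qed.

Lemma descent_letter_positions g ts b c t d : two_letter_descent g ts b c ->
  t < n -> g t = Some d -> t = ts \/ t = n'.
Proof.
case=> _ _ _ gD ht gt; case: (eqVneq t ts) => [|tts]; [by left | right].
by case: (ltngtP t n') => // tn; [rewrite gD in gt | lia].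
Qed.

Hypothesis n'_gt1 : 1 < n'.

Lemma no_descent_at_start b c : 1 < M -> two_letter_descent (L 0) 0 b c -> False.
Proof.
move=> hM D; have [g0 gn bc gD] := D.
have hD := window_distinct hM.
have h0 : L 1 0 = Diamond by rewrite L_succ ?gD //; lia.
pose s := place (std n (L 1)) 0 (upper n (std n (L 1))).
have sI : injective_on n s := injective_on_place (injective_on_std hD).
have hs : matches n (L 1) s := matches_place_diamond _ h0 (@matches_std _ _).
have gs : matches n (L 0) s.
  apply: matches_of_lt (window_distinct (ltnW hM)) sI _.
  move=> y z a' b' yz hz gy gz.
  have [ey|ey] := descent_letter_positions D (ltn_trans yz hz) gy;
    have [ez|ez] := descent_letter_positions D hz gz; subst; try lia.
  move: gy gz; rewrite g0 gn => -[<-] [<-].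
  rewrite /s place_at place_off //; have := lt_upper (std n (L 1)) (ltnSn n'); lia.
by have := window_unique sI (ltnW hM) hM gs hs.
Qed.

Lemma no_descent_before_hole ts b c : 1 < M -> ts < n' ->
  two_letter_descent (L 0) ts b c -> L 1 n' = Diamond -> False.
Proof.
move=> hM hts D L1n; have [g0 gn bc gD] := D.
pose s t := n - t.
have sI : injective_on n s by move=> y z hy hz; rewrite /s; lia.
have gs : matches n (L 0) s.
  apply: matches_of_lt (window_distinct (ltnW hM)) sI _ => y z a' b' yz hz gy gz.
  have [ey|ey] := descent_letter_positions D (ltn_trans yz hz) gy;
    have [ez|ez] := descent_letter_positions D hz gz; subst; try lia.
  by move: gy gz; rewrite g0 gn => -[<-] [<-]; rewrite /s; lia.
have hs : matches n (L 1) s.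
  apply: matches_of_lt (window_distinct hM) sI _ => y z a' b' yz hz hy hz'.
  have zn : z < n'.
    by case: (ltngtP z n') => // [nz | ezn]; [lia | move: hz'; rewrite ezn L1n].
  have yn : y < n' := ltn_trans yz zn.
  rewrite !L_succ // in hy hz'.
  have [ey|ey] := descent_letter_positions (t := y.+1) D yn hy;
    have [ez|ez] := descent_letter_positions (t := z.+1) D zn hz'; try lia.
  by move: hy hz'; rewrite ey ez g0 gn => -[<-] [<-]; rewrite /s; lia.
by have := window_unique sI (ltnW hM) hM gs hs.
Qed.

(* The last hypothesis allows proving the case [k = 0] first and then using it
   for all [k]. *)
Lemma no_max_letter_after_hole k a : k.+1 < M -> L k 0 = Diamond -> L k.+1 n' = Some a ->
  (forall t c, t < n' -> L k.+1 t = Some c -> c < a) ->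
  k = 0 \/ (1 < M -> L 0 0 = Diamond -> L 1 n' = Diamond) -> False.
Proof.
move=> hk Lk0 La amax k0; have hM : 1 < M by lia.
have kk : k != k.+1 by rewrite neq_ltn ltnSn.
have [t0 [c0 [ht0 Lt0]]] := next_window_prefix_letter (nx := succn)
  (fun i t _ => @L_succ i t) (ltnW hk) hk kk Lk0.
have [ts [w [hts fts wmax]]] := prefix_argmax ht0 Lt0.
have [b [c D]] := first_window_shape hk Lk0 La amax hts fts wmax.
case: (posnP ts) => [ts0 | ts_gt0].
  by move: D; rewrite ts0; apply: no_descent_at_start.
case L1n: (L 1 n') => [e|]; last exact: no_descent_before_hole hM hts D L1n.
have [g0 gn bc gD] := D.
have k_eq0 : k = 0.
  case: k0 => [//|noL1n]; have t0s : 0 != ts by rewrite eq_sym -lt0n.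
  by have := noL1n hM (gD 0 (ltn_trans ts_gt0 hts) t0s); rewrite L1n.
subst k.
have g1 : L 0 ts.+1 = Some w by rewrite -L_succ.
have [|ets] := descent_letter_positions (t := ts.+1) D hts g1; first lia.
have ewb : w = b by move: g1; rewrite ets gn => -[].
have := wmax ts.-1 c (leq_ltn_trans (leq_pred ts) hts).
by rewrite L_succ ?prednK //; [move/(_ g0); lia | lia].
Qed.

End Word.
End ExactCover.

(** * Complement and reversal *)

Lemma family_bounded n M (L : nat -> nat -> letter) :
  exists K, forall i t c, i < M -> t < n -> L i t = Some c -> c <= K.
Proof.
exists (\max_(i < M) \max_(t < n) oapp id 0 (L i t)) => i t c hi ht Lc.
pose F (i : 'I_M) := \max_(t < n) oapp id 0 (L i t).
apply: leq_trans (leq_bigmax (F := F) (Ordinal hi)).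
by have := leq_bigmax (F := fun t : 'I_n => oapp id 0 (L i t)) (Ordinal ht); rewrite /= Lc.
Qed.

Definition compl_family K (L : nat -> nat -> letter) i t := omap (subn K) (L i t).

Lemma matches_compl n K f s S : (forall t c, t < n -> f t = Some c -> c <= K) ->
  (forall t, t < n -> s t <= S) ->
  matches n (fun t => omap (subn K) (f t)) s <-> matches n f (fun t => S - s t).
Proof.
move=> fK sS; split=> fs y z a b hy hz fy fz.
  have := fs z y (K - b) (K - a) hz hy; rewrite fz fy => /(_ erefl erefl).
  by have := fK y a hy fy; have := fK z b hz fz; have := sS y hy; have := sS z hz; lia.
case fy': (f y) fy => [a'|] // [<-]; case fz': (f z) fz => [b'|] // [<-].
have := fs z y b' a' hz hy fz' fy'.
by have := fK y a' hy fy'; have := fK z b' hz fz'; have := sS y hy; have := sS z hz; lia.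
Qed.

Lemma exact_cover_compl n M L K :
  (forall i t c, i < M -> t < n -> L i t = Some c -> c <= K) ->
  exact_cover n M L -> exact_cover n M (compl_family K L).
Proof.
move=> LK [LD Lcov Luniq]; rewrite /compl_family.
have compl_sI s : injective_on n s -> injective_on n (fun t => upper n s - s t).
  move=> sI y z hy hz; have := lt_upper s hy; have := lt_upper s hz.
  by move=> ? ? ?; apply: sI => //; lia.
have sS s t : t < n -> s t <= upper n s by move/(lt_upper s)/ltnW.
split.
- move=> i hi y z c hy hz.
  case Ly: (L i y) => [a|] // [<-]; case Lz: (L i z) => [b|] // [eab].
  have := LK i y a hi hy Ly; have := LK i z b hi hz Lz => bK aK.
  by apply: (LD i hi y z a hy hz Ly); rewrite Lz; congr Some; lia.
- move=> s sI; have [j hj Lj] := Lcov _ (compl_sI s sI).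
  by exists j => //; apply/(matches_compl (fun t c => LK j t c hj) (sS s)).
- move=> s i j sI hi hj Li Lj; apply: (Luniq _ i j (compl_sI s sI) hi hj).
  + exact/(matches_compl (fun t c => LK i t c hi) (sS s)).
  + exact/(matches_compl (fun t c => LK j t c hj) (sS s)).
Qed.

Definition rev_family n' M (L : nat -> nat -> letter) i t := L (M.-1 - i) (n' - t).

Lemma matches_rev n' f s :
  matches n'.+1 (fun t => f (n' - t)) s <-> matches n'.+1 f (fun t => s (n' - t)).
Proof.
split=> fs y z a b hy hz fy fz.
  have ey : n' - (n' - y) = y by lia.
  have ez : n' - (n' - z) = z by lia.
  by rewrite (fs (n' - y) (n' - z) a b) ?ey ?ez //; lia.
have := fs (n' - y) (n' - z) a b; rewrite !subKn; try lia.
by apply=> //; rewrite ltnS leq_subr.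
Qed.

Lemma exact_cover_rev n' M L :
  exact_cover n'.+1 M L -> exact_cover n'.+1 M (rev_family n' M L).
Proof.
move=> [LD Lcov Luniq]; rewrite /rev_family.
have rev_sI s : injective_on n'.+1 s -> injective_on n'.+1 (fun t => s (n' - t)).
  by move=> sI y z hy hz /sI; lia.
split.
- move=> i hi y z c hy hz Ly Lz.
  by have := LD (M.-1 - i) ltac:(lia) (n' - y) (n' - z) c ltac:(lia) ltac:(lia) Ly Lz; lia.
- move=> s sI; have [j hj Lj] := Lcov _ (rev_sI s sI).
  exists (M.-1 - j); first lia.
  have -> : M.-1 - (M.-1 - j) = j by lia.
  exact/matches_rev.
- move=> s i j sI hi hj /matches_rev Li /matches_rev Lj.
  by have := Luniq _ (M.-1 - i) (M.-1 - j) (rev_sI s sI) ltac:(lia) ltac:(lia) Li Lj; lia.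
Qed.

Lemma overlapping_rev n' M L :
  overlapping n' M L -> overlapping n' M (rev_family n' M L).
Proof.
move=> L_succ i t hi ht; rewrite /rev_family.
have -> : M.-1 - i = (M.-1 - i.+1).+1 by lia.
have -> : n' - t = (n' - t.+1).+1 by lia.
by rewrite L_succ //; lia.
Qed.

Lemma rev_succ_mod M i : i < M -> (M.-1 - i.+1 %% M).+1 %% M = M.-1 - i.
Proof.
move=> hi; case: (ltnP i.+1 M) => h; first by rewrite (modn_small h) modn_small; lia.
have -> : i.+1 = M by lia.
by rewrite modnn subn0 prednK ?modnn; lia.
Qed.

Lemma cyc_overlapping_rev n' M L :
  cyc_overlapping n' M L -> cyc_overlapping n' M (rev_family n' M L).
Proof.
move=> L_cycle i t hi ht.
have hi' : M.-1 - i.+1 %% M < M by apply: leq_ltn_trans (leq_subr _ _) _; lia.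
rewrite /rev_family -(rev_succ_mod hi) L_cycle //; last lia.
by have -> : (n' - t.+1).+1 = n' - t by lia.
Qed.

Lemma word_hole_forward n' M L : exact_cover n'.+1 M L -> overlapping n' M L -> 1 < n' ->
  forall k, k.+1 < M -> L k 0 = Diamond -> L k.+1 n' = Diamond.
Proof.
move=> HL L_succ n'_gt1.
have [K LK] := family_bounded n'.+1 M L.
have Lc_succ : overlapping n' M (compl_family K L).
  by move=> i t hi ht; rewrite /compl_family L_succ.
have no_hole k : k = 0 \/ (1 < M -> L 0 0 = Diamond -> L 1 n' = Diamond) ->
    k.+1 < M -> L k 0 = Diamond -> L k.+1 n' = Diamond.
  move=> k0 hk Lk0; case La: (L k.+1 n') => [a|] //; exfalso.
  have [amax | amin] := last_letter_extreme HL L_succ hk Lk0 La.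
    exact: (no_max_letter_after_hole HL L_succ n'_gt1 hk Lk0 La amax k0).
  (* In the complemented family the minimal letter [a] becomes the maximal [K - a]. *)
  have := no_max_letter_after_hole (exact_cover_compl LK HL) Lc_succ n'_gt1 (a := K - a) hk.
  rewrite /compl_family Lk0 La; apply=> //.
    move=> t c ht; case Lt: (L k.+1 t) => [c'|] // [<-].
    have := amin t c' ht Lt; have := LK _ _ _ hk (leqW ht) Lt; lia.
  case: k0 => [-> | noL1n]; [by left | right=> hM].
  by case: (L 0 0) (noL1n hM) => // /(_ erefl) ->.
move=> k; apply: (no_hole k); right=> hM.
exact: (no_hole 0 (or_introl erefl) hM).
Qed.

Lemma word_hole_backward n' M L : exact_cover n'.+1 M L -> overlapping n' M L -> 1 < n' ->
  forall k, k.+1 < M -> L k.+1 n' = Diamond -> L k 0 = Diamond.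
Proof.
move=> HL L_succ n'_gt1 k hk Lk.
have := word_hole_forward (exact_cover_rev HL) (overlapping_rev L_succ) n'_gt1
  (k := M.-1 - k.+1).
rewrite /rev_family subn0 subnn.
have -> : M.-1 - (M.-1 - k.+1).+1 = k by lia.
have -> : M.-1 - (M.-1 - k.+1) = k.+1 by lia.
by apply=> //; lia.
Qed.

Lemma cycle_hole_backward n' M L : exact_cover n'.+1 M L -> cyc_overlapping n' M L ->
  1 < M -> forall k, k < M -> L (k.+1 %% M) n' = Diamond -> L k 0 = Diamond.
Proof.
move=> HL L_cycle M_gt1 k hk Lk.
have hk' : M.-1 - k.+1 %% M < M by apply: leq_ltn_trans (leq_subr _ _) _; lia.
have := cycle_hole_forward (exact_cover_rev HL) (cyc_overlapping_rev L_cycle) M_gt1 hk'.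
rewrite /rev_family rev_succ_mod // subn0 subnn.
have -> : M.-1 - (M.-1 - k) = k by lia.
have -> : M.-1 - (M.-1 - k.+1 %% M) = k.+1 %% M.
  by rewrite subKn // -ltnS prednK ?ltn_mod; lia.
by apply.
Qed.

(** * Universal partial words and cycles *)

Section Rank.
Variables (n : nat) (s : nat -> nat).
Hypothesis sI : injective_on n s.

Definition rank (y : 'I_n) := #|[pred z : 'I_n | s z < s y]|.

Lemma ltn_rank y z : (rank y < rank z) = (s y < s z).
Proof.
case: (leqP (s z) (s y)) => [zy | yz]; last first.
  apply: proper_card; apply/properP; split; last by exists y; rewrite !inE ?yz ?ltnn.
  by apply/subsetP=> w; rewrite !inE => /ltn_trans; apply.
apply/negbTE; rewrite -leqNgt; apply: subset_leq_card.
by apply/subsetP=> w; rewrite !inE => /leq_trans; apply.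
Qed.

Lemma rank_lt y : rank y < n.
Proof.
rewrite -[n in _ < n]card_ord; apply: proper_card; apply/properP; split.
  by apply/subsetP.
by exists y; rewrite // inE ltnn.
Qed.

Definition rank_ord y : 'I_n := Ordinal (rank_lt y).

Lemma rank_ordE y : rank_ord y = rank y :> nat.
Proof. by []. Qed.

Lemma rank_ord_inj : injective rank_ord.
Proof.
move=> y z /(congr1 (@nat_of_ord n)); rewrite !rank_ordE => eyz.
apply: val_inj; apply: (sI (ltn_ord y) (ltn_ord z)).
by have := ltn_rank y z; have := ltn_rank z y; rewrite eyz ltnn; lia.
Qed.

Lemma perm_of_injective_on : exists pi : 'S_n, forall y z, (pi y < pi z) = (s y < s z).
Proof. by exists (perm rank_ord_inj) => y z; rewrite !permE !rank_ordE ltn_rank. Qed.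

End Rank.

Lemma distinct_letters_uniq (f : seq letter) :
  uniq (ints f) -> distinct_letters (size f) (nth Diamond f).
Proof.
elim: f => [|x f IH] //= U [|y] [|z] c //= hy hz.
- by move=> fy fz; move: U; rewrite fy /ints /= mem_pmap map_id -fz mem_nth.
- by move=> fy fz; move: U; rewrite fz /ints /= mem_pmap map_id -fy mem_nth.
- move=> fy fz; congr S; apply: (IH _ y z c) => //.
  by case: x U => [x|] //= /andP[].
Qed.

Lemma covers_iff_matches n (f : seq letter) (g : nat -> letter) (pi : 'S_n)
    (s : nat -> nat) :
  size f = n -> (forall t, t < n -> nth Diamond f t = g t) ->
  (forall y z : 'I_n, (pi y < pi z) = (s y < s z)) ->
  covers f pi <-> matches n g s.
Proof.
move=> fn fg pis; split.
  case=> _ fpi y z a b hy hz gy gz.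
  rewrite -(pis (Ordinal hy) (Ordinal hz)).
  by apply: (fpi (Ordinal hy) (Ordinal hz) a b); rewrite fg //.
move=> gs; split=> // y z a b fy fz; rewrite pis.
apply: gs; rewrite // -fg //.
Qed.

Lemma exact_cover_of_covers n M (F : nat -> seq letter) (L : nat -> nat -> letter) :
  (forall i t, i < M -> t < n -> nth Diamond (F i) t = L i t) ->
  (forall i, i < M -> size (F i) = n) ->
  (forall i, i < M -> uniq (ints (F i))) ->
  (forall pi : 'S_n, exists! i, i < M /\ covers (F i) pi) ->
  exact_cover n M L.
Proof.
move=> FL Fn Fu Fcov; split.
- move=> i hi y z c hy hz; rewrite -(FL i y hi hy) -(FL i z hi hz).
  by have := distinct_letters_uniq (Fu i hi); rewrite Fn // => /(_ y z c hy hz).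
- move=> s sI; have [pi pis] := perm_of_injective_on sI.
  have [i [[hi Fi] _]] := Fcov pi; exists i => //.
  by apply/(covers_iff_matches (Fn i hi) (FL i ^~ hi) pis).
- move=> s i j sI hi hj Li Lj; have [pi pis] := perm_of_injective_on sI.
  have [x [_ xu]] := Fcov pi.
  have Fi : covers (F i) pi by apply/(covers_iff_matches (Fn i hi) (FL i ^~ hi) pis).
  have Fj : covers (F j) pi by apply/(covers_iff_matches (Fn j hj) (FL j ^~ hj) pis).
  by rewrite -(xu i (conj hi Fi)) -(xu j (conj hj Fj)).
Qed.

Lemma upword_exact_cover n u : is_upword n u ->
  exact_cover n (size u - n + 1) (fun i t => nth Diamond u (i + t)).
Proof.
case=> hn _ _ Fu Fcov; apply: (exact_cover_of_covers (F := wfactor n u)) => //.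
- by move=> i t _ ht; rewrite /wfactor nth_take // nth_drop.
- by move=> i hi; rewrite /wfactor size_take size_drop; case: ifP; lia.
Qed.

Lemma upcycle_exact_cover n u : is_upcycle n u ->
  exact_cover n (size u) (fun i t => nth Diamond u ((i + t) %% size u)).
Proof.
case=> hn _ _ Fu Fcov; apply: (exact_cover_of_covers (F := cfactor n u)) => //.
- by move=> i t _ ht; rewrite /cfactor (nth_map 0) ?size_iota // nth_iota.
- by move=> i _; rewrite /cfactor size_map size_iota.
Qed.

Lemma upword_holes n u : 2 < n -> is_upword n u ->
  forall k, k < size u -> nth Diamond u k = Diamond ->
    (k + n < size u -> nth Diamond u (k + n) = Diamond) /\
    (n <= k -> nth Diamond u (k - n) = Diamond).
Proof.
case: n => [//|n'] n'_gt1 /upword_exact_cover HL k hk uk.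
have L_succ : overlapping n' (size u - n'.+1 + 1) (fun i t => nth Diamond u (i + t)).
  by move=> i t _ _; rewrite addSnnS.
split=> [hkn | hnk].
  have := word_hole_forward HL L_succ n'_gt1 (k := k).
  by rewrite addn0 addSnnS; apply=> //; lia.
have := word_hole_backward HL L_succ n'_gt1 (k := k - n'.+1).
have -> : (k - n'.+1).+1 + n' = k by lia.
by rewrite addn0; apply=> //; lia.
Qed.

Lemma upcycle_holes n u : is_upcycle n u ->
  forall k, k < size u -> nth Diamond u k = Diamond ->
    nth Diamond u ((k + n) %% size u) = Diamond /\
    nth Diamond u ((k + size u - n) %% size u) = Diamond.
Proof.
move=> Hc k hk uk; have hn : n <= size u by case: Hc.
case: n Hc hn => [|n'] Hc hn; first by rewrite addn0 subn0 modnDr modn_small.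
have [N_le1 | N_gt1] := leqP (size u) 1.
  have [eN k0] : size u = 1 /\ k = 0 by lia.
  by move: uk; rewrite eN !modn1 k0 => ->.
have L_cycle : cyc_overlapping n' (size u) (fun i t => nth Diamond u ((i + t) %% size u)).
  by move=> i t _ _; rewrite modnDml addSnnS.
have HL := upcycle_exact_cover Hc; split.
  have := cycle_hole_forward HL L_cycle N_gt1 hk.
  by rewrite addn0 modn_small // modnDml addSnnS; apply.
set i := (k + size u - n'.+1) %% size u.
have hi : i < size u by rewrite /i ltn_mod; lia.
have := cycle_hole_backward HL L_cycle N_gt1 hi.
rewrite addn0 modn_mod modnDml addSnnS /i modnDml.
have -> : k + size u - n'.+1 + n'.+1 = k + size u by lia.
by rewrite modnDr modn_small //; apply.
Qed.

Theorem lemma5 (n : nat) (u : seq letter) : 3 <= n ->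
  (is_upword n u ->
     forall k, k < size u -> nth Diamond u k = Diamond ->
       (k + n < size u -> nth Diamond u (k + n) = Diamond) /\
       (n <= k -> nth Diamond u (k - n) = Diamond)) /\
  (is_upcycle n u ->
     forall k, k < size u -> nth Diamond u k = Diamond ->
       nth Diamond u ((k + n) %% size u) = Diamond /\
       nth Diamond u ((k + size u - n) %% size u) = Diamond).
Proof. by move=> n_ge3; split; [exact: upword_holes | exact: upcycle_holes]. Qed.
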